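(* Let $\mathcal{D}=(\Omega,\mathcal{B})$ be a supersimple $2$-$(n,4,\lambda)$ design with $n=2\lambda+2$, and let $\infty\in\Omega$. The following are equivalent: (1) $\mathcal{D}$ satisfies property $(\triangle)$; (2) $\mathcal{D}$ is a Boolean quadruple system of order $2^m$ for some integer $m\ge2$; (3) $\pi_\infty(\mathcal{D})=\{1\}$ and $\mathcal{L}_\infty(\mathcal{D})$ is elementary abelian of order $2^m$ for some integer $m\ge2$.
   Context: A $2$-$(n,4,\lambda)$ design $(\Omega,\mathcal{B})$: $n$ points, a multiset of $4$-subsets (lines), every $2$-subset in exactly $\lambda$ lines; supersimple: distinct lines meet in at most two points. For distinct $a,b$ with lines $\{a,b,a_i,b_i\}$ ($1\le i\le\lambda$) through them, the elementary move is $[a,b]:=(a,b)\prod_i(a_i,b_i)\in\operatorname{Sym}(\Omega)$; $[a,a]:=1$. Permutations act on the right, products composed left to right; $[a_0,\dots,a_k]:=[a_0,a_1]\cdots[a_{k-1},a_k]$. $\mathcal{L}_\infty(\mathcal{D})$ is the set of all move sequences starting at $\infty$, and $\pi_\infty(\mathcal{D})$ the set of all move sequences starting and ending at $\infty$. Property $(\triangle)$: if $B_1,B_2\in\mathcal{B}$ with $|B_1\cap B_2|=2$ then $B_1\triangle B_2\in\mathcal{B}$. The Boolean quadruple system of order $2^m$ ($m\ge2$) is the design with point set $\mathbb{F}_2^m$ whose lines are the $4$-subsets $\{v_1,\dots,v_4\}$ with $\sum v_i=0$ (equivalently, the affine planes of $\mathbb{F}_2^m$); ''$\mathcal{D}$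 is'' such a system means up to identification of the point set. *)

From HB Require Import structures.
From mathcomp Require Import all_boot all_order all_algebra all_fingroup all_solvable.
Set Implicit Arguments. Unset Strict Implicit. Unset Printing Implicit Defensive.

Section Designs.
Variable T : finType.

(* A design on point set T (all of T) with multiset of lines given as a list. *)
Definition is_2_design (k lam : nat) (blocks : seq {set T}) : Prop :=
  (forall B, B \in blocks -> #|B| = k) /\
  (forall a b : T, a != b ->
     count (fun B : {set T} => (a \in B) && (b \in B)) blocks = lam).

Definition supersimple (blocks : seq {set T}) : Prop :=
  forall i j, i < size blocks -> j < size blocks -> i != j ->
    #|nth set0 blocks i :&: nth set0 blocks j| <= 2.

Definition prop_triangle (blocks : seq {set T}) : Prop :=
  forall B1 B2, B1 \in blocks -> B2 \in blocks -> #|B1 :&: B2| = 2 ->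
    (B1 :\: B2) :|: (B2 :\: B1) \in blocks.

Definition other_tperm (B : {set T}) (a b : T) : {perm T} :=
  let C := B :\: [set a; b] in
  let x := odflt a [pick y in C] in
  let y := odflt a [pick z in C :\ x] in
  tperm x y.

Definition move (blocks : seq {set T}) (a b : T) : {perm T} :=
  if a == b then 1%g
  else (tperm a b * \prod_(B <- blocks | (a \in B) && (b \in B))
          other_tperm B a b)%g.

(* [a_0, a_1, ..., a_k] = [a_0,a_1] ... [a_{k-1},a_k] (left to right), given a_0 and
   the list [a_1; ...; a_k]. mathcomp's perm product is left-to-right composition. *)
Fixpoint moveseq (blocks : seq {set T}) (a : T) (s : seq T) : {perm T} :=
  match s with
  | [::] => 1%g
  | b :: s' => (move blocks a b * moveseq blocks b s')%g
  end.

Definition L_at (blocks : seq {set T}) (inf : T) (g : {perm T}) : Prop :=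
  exists s : seq T, g = moveseq blocks inf s.

Definition pi_at (blocks : seq {set T}) (inf : T) (g : {perm T}) : Prop :=
  exists s : seq T, last inf s = inf /\ g = moveseq blocks inf s.

(* D is (up to identification of points) the Boolean quadruple system of order 2^m:
   lines are exactly the 4-subsets with zero sum in F_2^m. *)
Definition is_BQS (blocks : seq {set T}) (m : nat) : Prop :=
  exists f : T -> 'rV['F_2]_m, bijective f /\
    forall B : {set T},
      (B \in blocks) = (#|B| == 4) && (\sum_(x in B) f x == 0)%R.

End Designs.

(* A move [a,b] is an involution exchanging a and b.  The lam lines through a
   and b cover the other 2 lam points in disjoint pairs, so {a, b, p, [a,b] p}
   is a line for every further point p.  All three conditions are equivalent to
   the identity [a,b] = [c,a][c,b].  Property (triangle) gives it by pasting the
   two lines through c that carry p, [c,a] p and [c,b] [c,a] p.  Conversely,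
   under this identity the moves [inf,x] commute and square to 1, so they form
   an elementary abelian 2-group of order n acting regularly, every loop at inf
   composes to 1, and {a, b, c, d} is a line exactly when
   [inf,a][inf,b][inf,c][inf,d] = 1: reading this group as F_2^m turns the
   design into the Boolean quadruple system.  There, property (triangle) holds
   because over F_2 the sum over the symmetric difference of B1 and B2 is the
   sum over B1 plus the sum over B2.  Back from (3), trivial loops give
   [a,b] = [inf,a][inf,b], and commutativity yields the identity. *)

From HB Require Import structures.
From mathcomp Require Import all_boot all_order all_algebra all_fingroup all_solvable.
From mathcomp Require Import zify mxabelem.
Set Implicit Arguments. Unset Strict Implicit. Unset Printing Implicit Defensive.
Import GRing.Theory.

Ltac rewrite_neqs := repeat match goal with
 | H : is_true (?a != ?b) |- context [?a == ?b] => rewrite (negbTE H)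
 | H : is_true (?a != ?b) |- context [?b == ?a] => rewrite (eq_sym b a) (negbTE H)
 end.

Ltac finset_eq := apply/setP => ?; rewrite !inE;
  repeat (case: eqP => [->|?]; rewrite_neqs; rewrite ?eqxx /=); try done;
  do ?case: eqP => //.

Section SmallSets.
Variable T : finType.
Implicit Types a b c d : T.

Lemma card4_neq a b c d : #|[set a; b; c; d]| = 4 ->
  [/\ a != b, a != c, a != d & [/\ b != c, b != d & c != d]].
Proof.
have -> : [set a; b; c; d] = a |: (b |: (c |: [set d])) by finset_eq.
rewrite !cardsU1 cards1 !inE.
by case: (a == b); case: (a == c); case: (a == d); case: (b == c);
  case: (b == d); case: (c == d).
Qed.

Lemma cards3 a b c : a != b -> a != c -> b != c -> #|[set a; b; c]| = 3.
Proof.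
have -> : [set a; b; c] = a |: (b |: [set c]) by finset_eq.
by move=> *; rewrite !cardsU1 cards1 !inE; rewrite_neqs.
Qed.

Lemma cards4 a b c d : a != b -> a != c -> a != d -> b != c -> b != d -> c != d ->
  #|[set a; b; c; d]| = 4.
Proof.
have -> : [set a; b; c; d] = a |: [set b; c; d] by finset_eq.
by move=> ab ac ad bc bd cd; rewrite cardsU1 cards3 // !inE; rewrite_neqs.
Qed.

Lemma cards4_set (B : {set T}) : #|B| = 4 -> exists a b c d, B = [set a; b; c; d].
Proof.
move=> B4; have /card_gt0P [a Ba] : 0 < #|B| by rewrite B4.
have Ba3 : #|B :\ a| = 3 by have := cardsD1 a B; rewrite Ba B4 /=; lia.
have /card_gt0P [b Bab] : 0 < #|B :\ a| by rewrite Ba3.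
have /cards2P [c [d [_ Ecd]]] : #|B :\ a :\ b| == 2.
  by have := cardsD1 b (B :\ a); rewrite Bab Ba3 /=; lia.
exists a, b, c, d; rewrite -(setD1K Ba) -(setD1K Bab) Ecd; by finset_eq.
Qed.

End SmallSets.

Section PermProducts.
Variables (T : finType) (I : eqType).

Lemma big_perm_fixed (s : seq I) (F : I -> {perm T}) p :
  (forall i, i \in s -> F i p = p) -> (\prod_(i <- s) F i)%g p = p.
Proof.
elim: s => [|i s IH] Fp; first by rewrite big_nil perm1.
rewrite big_cons permM Fp ?mem_head // IH // => j sj.
by apply: Fp; rewrite inE sj orbT.
Qed.

Lemma big_perm_single (s : seq I) (F : I -> {perm T}) i0 p q :
  uniq s -> i0 \in s -> F i0 p = q ->
  (forall i, i \in s -> i != i0 -> F i p = p /\ F i q = q) ->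
  (\prod_(i <- s) F i)%g p = q.
Proof.
elim: s => // i s IH /= /andP[si uniq_s]; rewrite inE => s_i0 Fi0 Fi.
rewrite big_cons permM; case: (eqVneq i i0) si => [->|ne_i] si.
- rewrite Fi0 big_perm_fixed // => j sj.
  apply: (proj2 (Fi j _ _)); first by rewrite inE sj orbT.
  by apply/eqP => E; rewrite -E sj in si.
- rewrite (proj1 (Fi i (mem_head _ _) ne_i)); apply: IH => //.
  + by case/orP: s_i0 => // /eqP E; rewrite E eqxx in ne_i.
  + by move=> j sj; apply: Fi; rewrite inE sj orbT.
Qed.

End PermProducts.

Lemma BQS_triangle (T : finType) (blocks : seq {set T}) m :
  is_BQS blocks m -> prop_triangle blocks.
Proof.
move=> [f [_ blocksE]] B1 B2; rewrite !blocksE => /andP[/eqP B1_4 /eqP sum1].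
move=> /andP[/eqP B2_4 /eqP sum2] B12_2.
have char2 : (2 \in [pchar 'F_2])%R by apply: pchar_Fp.
have dbl (v : 'rV['F_2]_m) : (v + v = 0)%R.
  by apply/rowP => i; rewrite !mxE addrr_pchar2.
apply/andP; split.
- rewrite cardsU cardsD cardsD B1_4 B2_4 [B2 :&: B1]setIC B12_2.
  suff -> : (B1 :\: B2) :&: (B2 :\: B1) = set0 by rewrite cards0.
  by apply/setP => x; rewrite !inE; case: (x \in B1); case: (x \in B2).
- have split_sum (A C : {set T}) :
    (\sum_(x in A) f x = \sum_(x in A :&: C) f x + \sum_(x in A :\: C) f x)%R.
    exact: big_setID.
  rewrite (split_sum _ B1).
  have -> : (B1 :\: B2 :|: B2 :\: B1) :&: B1 = B1 :\: B2.
    by apply/setP => x; rewrite !inE; case: (x \in B1); case: (x \in B2).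
  have -> : (B1 :\: B2 :|: B2 :\: B1) :\: B1 = B2 :\: B1.
    by apply/setP => x; rewrite !inE; case: (x \in B1); case: (x \in B2).
  rewrite (split_sum _ B2) in sum1; rewrite (split_sum _ B1) setIC in sum2.
  apply/eqP; rewrite -[LHS]add0r -{1}(dbl (\sum_(x in B1 :&: B2) f x)%R).
  by rewrite addrACA sum1 sum2 addr0.
Qed.

Section Moves.
Variables (T : finType) (lam : nat) (blocks : seq {set T}).
Hypotheses (design : is_2_design 4 lam blocks) (simple : supersimple blocks)
  (card_T : #|T| = 2 * lam + 2).

Local Notation mv := (move blocks).
Implicit Types (a b c d p q r : T) (B : {set T}).

Definition is_line a b c d := [set a; b; c; d] \in blocks.

Lemma card_block B : B \in blocks -> #|B| = 4.
Proof. by case: design => card_B _; apply: card_B. Qed.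

Lemma eq_block_meet B1 B2 :
  B1 \in blocks -> B2 \in blocks -> 2 < #|B1 :&: B2| -> B1 = B2.
Proof.
move=> B1b B2b meet3; apply/eqP; apply: contraTT meet3 => neB.
have ne_idx : index B1 blocks != index B2 blocks.
  by apply: contra neB => /eqP E; rewrite -(nth_index set0 B1b) E nth_index.
by rewrite -leqNgt -{1}(nth_index set0 B1b) -(nth_index set0 B2b) simple
  ?index_mem.
Qed.

Lemma uniq_blocks : uniq blocks.
Proof.
apply/(uniqPn set0) => -[i [j [lt_ij lt_j E]]].
have := simple (ltn_trans lt_ij lt_j) lt_j (negbT (ltn_eqF lt_ij)).
by rewrite E setIid card_block // mem_nth.
Qed.

Lemma line_neq a b c d : is_line a b c d ->
  [/\ a != b, a != c, a != d & [/\ b != c, b != d & c != d]].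
Proof. by move=> abcd; apply: card4_neq; apply: card_block. Qed.

Lemma eq_block3 B1 B2 a b c : B1 \in blocks -> B2 \in blocks ->
  a != b -> a != c -> b != c -> a \in B1 -> b \in B1 -> c \in B1 ->
  a \in B2 -> b \in B2 -> c \in B2 -> B1 = B2.
Proof.
move=> B1b B2b ab ac bc a1 b1 c1 a2 b2 c2; apply: eq_block_meet => //.
rewrite -(cards3 ab ac bc); apply: subset_leq_card; apply/subsetP => x.
by rewrite !inE => /orP[/orP[]|]/eqP->; rewrite ?a1 ?a2 ?b1 ?b2 ?c1 ?c2.
Qed.

Lemma line_fourth a b c d e : is_line a b c d -> is_line a b c e -> d = e.
Proof.
move=> abcd abce; have [ab ac ad [bc bd cd]] := line_neq abcd.
have [_ _ ae [_ be ce]] := line_neq abce.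
have E : [set a; b; c; d] = [set a; b; c; e].
  by apply: (eq_block3 (a := a) (b := b) (c := c)) => //; rewrite !inE eqxx ?orbT.
have : e \in [set a; b; c; d] by rewrite E !inE eqxx ?orbT.
by rewrite !inE; rewrite_neqs => /eqP.
Qed.

Lemma cardsD2_block B a b : B \in blocks -> a \in B -> b \in B -> a != b ->
  #|B :\: [set a; b]| = 2.
Proof.
move=> Bb aB bB ab; rewrite cardsD card_block //.
suff -> : B :&: [set a; b] = [set a; b] by rewrite cards2 ab.
by apply/setIidPr; apply/subsetP => x; rewrite !inE => /orP[]/eqP->.
Qed.

Lemma block_other_tperm B a b : B \in blocks -> a \in B -> b \in B -> a != b ->
  exists x y, [/\ B = [set a; b; x; y], #|[set a; b; x; y]| = 4 &
    other_tperm B a b = tperm x y].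
Proof.
move=> Bb aB bB ab.
have /cards2P [x [y [xy EC]]] : #|B :\: [set a; b]| == 2 by rewrite cardsD2_block.
have EB : B = [set a; b; x; y].
  have EI : B :&: [set a; b] = [set a; b].
    by apply/setIidPr; apply/subsetP => z; rewrite !inE => /orP[]/eqP->.
  by rewrite -(setID B [set a; b]) EI EC; finset_eq.
exists x, y; split => //; first by rewrite -EB card_block.
rewrite /other_tperm EC.
case: pickP => [z|]; last by move/(_ x); rewrite !inE eqxx.
rewrite !inE => /orP[]/eqP-> /=; case: pickP => [w|].
- rewrite !inE => /andP[wx /orP[]/eqP Ew]; last by rewrite Ew.
  by rewrite Ew eqxx in wx.
- by move/(_ y); rewrite !inE eqxx orbT andbT eq_sym xy.
- rewrite !inE => /andP[wy /orP[]/eqP Ew]; first by rewrite Ew tpermC.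
  by rewrite Ew eqxx in wy.
- by move/(_ x); rewrite !inE eqxx ?orbT ?andbT xy.
Qed.

Lemma other_tperm_fix B a b z : B \in blocks -> a \in B -> b \in B -> a != b ->
  z \notin B :\: [set a; b] -> other_tperm B a b z = z.
Proof.
move=> Bb aB bB ab; have [x [y [EB B4 ->]]] := block_other_tperm Bb aB bB ab.
case/card4_neq: B4 => _ ax ay [bx by' xy].
rewrite EB !inE negb_and negbK => zB.
rewrite tpermD //; apply/eqP => E; move: zB; rewrite -E; rewrite_neqs;
  by rewrite eqxx ?orbT.
Qed.

Lemma move_refl a : mv a a = 1%g.
Proof. by rewrite /move eqxx. Qed.

Lemma moveC a b : mv a b = mv b a.
Proof.
rewrite /move eq_sym; case: eqP => // /eqP ba; rewrite tpermC; congr (_ * _)%g.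
have ab : a != b by rewrite eq_sym.
rewrite big_seq_cond [RHS]big_seq_cond.
apply: eq_big => [B|B]; first by rewrite [(a \in B) && _]andbC.
move=> /andP[Bb /andP[aB bB]].
have [x [y [EB B4 ->]]] := block_other_tperm Bb aB bB ab.
have [x' [y' [EB' B4' ->]]] := block_other_tperm Bb bB aB ba.
have [_ ax ay [bx by' xy]] := card4_neq B4.
have [_ bx' by'' [ax' ay' xy']] := card4_neq B4'.
have : x' \in B by rewrite EB' !inE eqxx ?orbT.
have : y' \in B by rewrite EB' !inE eqxx ?orbT.
rewrite EB !inE; rewrite_neqs => /= /orP[]/eqP E1 /orP[]/eqP E2; subst;
  first [done | by rewrite tpermC | by rewrite eqxx in xy' | by rewrite eqxx in xy].
Qed.

Lemma move_swap a b : a != b -> mv a b a = b /\ mv a b b = a.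
Proof.
move=> ab; rewrite /move (negbTE ab) !permM tpermL tpermR.
split; rewrite -big_filter; apply: big_perm_fixed => B;
  rewrite mem_filter => /andP[/andP[aB bB] Bb];
  by apply: other_tperm_fix => //; rewrite !inE eqxx ?orbT.
Qed.

Lemma move_first a b : mv a b a = b.
Proof.
by case: (eqVneq a b) => [->|ab]; [rewrite move_refl perm1 | case: (move_swap ab)].
Qed.

Lemma card_bigcup_lines a b (s : seq {set T}) : a != b -> uniq s ->
  {subset s <= blocks} -> (forall B, B \in s -> (a \in B) && (b \in B)) ->
  #|\bigcup_(B <- s) (B :\: [set a; b])| = 2 * size s.
Proof.
move=> ab; elim: s => [|B s IH] /=; first by rewrite big_nil cards0.
move=> /andP[Bs uniq_s] sub_s abs.
have Bb : B \in blocks by apply: sub_s; rewrite mem_head.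
have /andP[aB bB] := abs B (mem_head _ _).
have sub_s' : {subset s <= blocks}.
  by move=> C Cs; apply: sub_s; rewrite inE Cs orbT.
have abs' C : C \in s -> (a \in C) && (b \in C).
  by move=> Cs; apply: abs; rewrite inE Cs orbT.
rewrite big_cons cardsU cardsD2_block // IH //.
suff -> : (B :\: [set a; b]) :&: \bigcup_(C <- s) (C :\: [set a; b]) = set0.
  by rewrite cards0 subn0 /=; lia.
apply/setP => z; rewrite inE [z \in set0]inE; apply/negP => /andP[zB].
rewrite bigcup_seq => /bigcupP [C Cs zC].
have /andP[aC bC] := abs' C Cs.
move: zB zC; rewrite !inE => /andP[/norP[za zb] zB] /andP[_ zC].
have E : B = C.
  by apply: (eq_block3 (a := a) (b := b) (c := z)); rewrite // ?sub_s' // eq_sym.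
by rewrite E Cs in Bs.
Qed.

Lemma line_through a b p : a != b -> p != a -> p != b -> exists q, is_line a b p q.
Proof.
move=> ab pa pb.
set s := filter (fun B : {set T} => (a \in B) && (b \in B)) blocks.
have size_s : size s = lam by rewrite size_filter; case: design => _ ->.
have uniq_s : uniq s by rewrite filter_uniq // uniq_blocks.
have sub_s : {subset s <= blocks} by move=> B; rewrite mem_filter => /andP[].
have abs B : B \in s -> (a \in B) && (b \in B) by rewrite mem_filter => /andP[].
case: (boolP (has (fun B : {set T} => p \in B) s)) => [/hasP [B Bs pB]|].
- have /andP[aB bB] := abs B Bs.
  have [x [y [EB _ _]]] := block_other_tperm (sub_s B Bs) aB bB ab.
  move: pB; rewrite EB !inE (negbTE pa) (negbTE pb) /= => /orP[]/eqP ->.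
  + by exists y; rewrite /is_line -EB sub_s.
  + by exists x; rewrite /is_line (_ : [set a; b; y; x] = B) ?sub_s // EB; finset_eq.
- move/hasPn => p_out.
  have : \bigcup_(B <- s) (B :\: [set a; b]) \subset ~: [set a; b; p].
    apply/subsetP => z; rewrite bigcup_seq => /bigcupP [B Bs].
    rewrite !inE => /andP[/norP[za zb] zB]; rewrite (negbTE za) (negbTE zb) /=.
    by apply: contraNneq (p_out B Bs) => <-.
  move/subset_leq_card; rewrite card_bigcup_lines // size_s.
  have := cardsC [set a; b; p].
  by rewrite cards3 // 1?eq_sym // card_T; lia.
Qed.

Lemma move_line a b p : a != b -> p != a -> p != b -> is_line a b p (mv a b p).
Proof.
move=> ab pa pb; have [q abpq] := line_through ab pa pb.
suff -> : mv a b p = q by [].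
have [_ ap aq [bp bq pq]] := line_neq abpq.
rewrite /move (negbTE ab) permM tpermD ?(eq_sym a) ?(eq_sym b) // -big_filter.
have aL : a \in [set a; b; p; q] by rewrite !inE eqxx.
have bL : b \in [set a; b; p; q] by rewrite !inE eqxx ?orbT.
have pL : p \in [set a; b; p; q] by rewrite !inE eqxx ?orbT.
have qL : q \in [set a; b; p; q] by rewrite !inE eqxx ?orbT.
(* Of the transpositions making up [mv a b], only that of the line
   [{a, b, p, q}] moves [p] or [q]. *)
apply: (big_perm_single (i0 := [set a; b; p; q])).
- by rewrite filter_uniq // uniq_blocks.
- by rewrite mem_filter aL bL.
- have [x [y [EB B4 ->]]] := block_other_tperm abpq aL bL ab.
  have [_ _ _ [_ _ xy]] := card4_neq B4.
  move: (pL) (qL); rewrite EB !inE; rewrite_neqs => /= /orP[]/eqP E1 /orP[]/eqP E2;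
    subst; rewrite ?tpermL ?tpermR //; by rewrite eqxx in pq.
- move=> B; rewrite mem_filter => /andP[/andP[aB bB] Bb] neB.
  split; apply: other_tperm_fix => //; rewrite !inE negb_and negbK; apply/orP;
    right; apply: contra_neqN neB => xB.
  + by apply: (eq_block3 (a := a) (b := b) (c := p)); rewrite // eq_sym.
  + by apply: (eq_block3 (a := a) (b := b) (c := q)); rewrite // eq_sym.
Qed.

Lemma move_lineE a b p q : is_line a b p q -> mv a b p = q.
Proof.
move=> abpq; have [ab ap aq [bp bq pq]] := line_neq abpq.
by apply: line_fourth (move_line _ _ _) abpq; rewrite // eq_sym.
Qed.

Lemma move_mul_self a b : (mv a b * mv a b = 1)%g.
Proof.
case: (eqVneq a b) => [->|ab]; first by rewrite move_refl mulg1.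
apply/permP => p; rewrite permM perm1; have [mv_a mv_b] := move_swap ab.
case: (eqVneq p a) => [->|pa]; first by rewrite mv_a mv_b.
case: (eqVneq p b) => [->|pb]; first by rewrite mv_b mv_a.
apply: move_lineE; rewrite /is_line (_ : [set a; b; _; p] = [set a; b; p; mv a b p]).
  exact: move_line.
by finset_eq.
Qed.

Lemma invg_move a b : (mv a b)^-1%g = mv a b.
Proof. by apply/eqP; rewrite eq_invg_mul move_mul_self. Qed.

Definition moves_compose := forall a b c, mv a b = (mv c a * mv c b)%g.

Lemma triangle_line a b c p q r : prop_triangle blocks ->
  is_line c a p q -> is_line c b q r ->
  a != b -> a != r -> p != b -> p != r -> is_line a b p r.
Proof.
move=> tri capq cbqr ab ar pb pr.
have [ca cp cq [ap aq pq]] := line_neq capq.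
have [cb _ cr [bq br qr]] := line_neq cbqr.
have := tri _ _ capq cbqr.
have -> : [set c; a; p; q] :&: [set c; b; q; r] = [set c; q] by finset_eq.
rewrite cards2 cq => /(_ erefl).
suff -> : [set c; a; p; q] :\: [set c; b; q; r] :|: [set c; b; q; r] :\: [set c; a; p; q]
  = [set a; b; p; r] by [].
by finset_eq.
Qed.

(* [mv c a p] and [mv c b (mv c a p)] lie on lines through [c] sharing two
   points, so property (triangle) yields the line [{a, b, p, mv c b (mv c a p)}]. *)
Lemma triangle_move_generic a b c p : prop_triangle blocks ->
  a != b -> c != a -> c != b -> p != a -> p != b -> p != c ->
  mv c b (mv c a p) = mv a b p.
Proof.
move=> tri ab ca cb pa pb pc; apply/esym/move_lineE.
have capq := move_line ca pc pa; set q := mv c a p in capq *.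
have [_ _ cq [_ _ pq]] := line_neq capq.
case: (eqVneq q b) => [qb|qb].
  have [mv_cb mv_bc] := move_swap cb; rewrite qb mv_bc.
  by rewrite /is_line (_ : [set a; b; p; c] = [set c; a; p; q]) // qb; finset_eq.
have qc : q != c by rewrite eq_sym.
have cbqr := move_line cb qc qb; set r := mv c b q in cbqr *.
have [_ _ cr [_ _ qr]] := line_neq cbqr.
apply: (triangle_line tri capq cbqr) => //; apply/eqP => E; rewrite -E in cbqr.
- have caqp : is_line c a q p.
    by rewrite /is_line (_ : [set c; a; q; p] = [set c; a; p; q]) //; finset_eq.
  have caqb : is_line c a q b.
    by rewrite /is_line (_ : [set c; a; q; b] = [set c; b; q; a]) //; finset_eq.
  by move: pb; rewrite (line_fourth caqp caqb) eqxx.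
- have cqpa : is_line c q p a.
    by rewrite /is_line (_ : [set c; q; p; a] = [set c; a; p; q]) //; finset_eq.
  have cqpb : is_line c q p b.
    by rewrite /is_line (_ : [set c; q; p; b] = [set c; b; q; p]) //; finset_eq.
  by move: ab; rewrite (line_fourth cqpa cqpb) eqxx.
Qed.

Lemma triangle_moves_compose : prop_triangle blocks -> moves_compose.
Proof.
move=> tri a b c.
case: (eqVneq a b) => [->|ab]; first by rewrite move_refl move_mul_self.
case: (eqVneq c a) => [->|ca]; first by rewrite move_refl mul1g.
case: (eqVneq c b) => [->|cb]; first by rewrite move_refl mulg1 moveC.
apply/permP => p; rewrite permM.
case: (eqVneq p a) => [->|pa]; first by rewrite [mv c a]moveC !move_first.
case: (eqVneq p b) => [->|pb].
  rewrite [mv a b]moveC move_first; apply/esym/move_lineE.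
  have := move_line ca (_ : b != c) (_ : b != a); rewrite !(eq_sym b) => /(_ cb ab).
  by rewrite /is_line (_ : [set c; b; _; a] = [set c; a; b; mv c a b]) //; finset_eq.
case: (eqVneq p c) => [->|pc]; last by rewrite triangle_move_generic.
rewrite move_first; apply/esym/move_lineE.
have := move_line ab ca cb.
by rewrite /is_line (_ : [set c; b; a; _] = [set a; b; c; mv a b c]) //; finset_eq.
Qed.

Section ComposingMoves.
Hypothesis compose : moves_compose.

Lemma moves_commute c x y : commute (mv c x) (mv c y).
Proof. by rewrite /commute -!compose moveC. Qed.

(* Every point [p] is [mv c p c]. *)
Lemma central_fixed_perm c (h : {perm T}) :
  (forall p, commute (mv c p) h) -> h c = c -> h = 1%g.
Proof.
move=> h_comm hc; apply/permP => p; rewrite perm1.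
by rewrite -{1}(move_first c p) -permM h_comm permM hc move_first.
Qed.

Lemma move_image a b c : mv a b = mv c (mv a b c).
Proof.
set d := mv a b c; suff mv1 : (mv a b * mv c d = 1)%g.
  by rewrite -[mv a b]mulg1 -(move_mul_self c d) mulgA mv1 mul1g.
apply: (central_fixed_perm (c := c)).
- move=> p; rewrite (compose a b c); apply: commuteM; first apply: commuteM;
    exact: moves_commute.
- by rewrite permM moveC move_first.
Qed.

Lemma moveseqE a s : moveseq blocks a s = mv a (last a s).
Proof.
elim: s a => [|b s IH] a /=; first by rewrite move_refl.
by rewrite IH (compose a (last b s) b) moveC.
Qed.

Variable inf : T.

Definition moves_at := [set mv inf x | x : T].

Lemma group_set_moves_at : group_set moves_at.
Proof.
apply/group_setP; split; first by apply/imsetP; exists inf; rewrite ?move_refl.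
move=> g h /imsetP [x _ ->] /imsetP [y _ ->].
by rewrite -compose; apply/imsetP; exists (mv x y inf) => //; apply: move_image.
Qed.

Canonical moves_at_group := Group group_set_moves_at.

Lemma moves_atP g : g \in moves_at <-> L_at blocks inf g.
Proof.
split; first by case/imsetP => x _ ->; exists [:: x]; rewrite /= mulg1.
by case=> s ->; rewrite moveseqE; apply/imsetP; exists (last inf s).
Qed.

Lemma pi_at_trivial g : pi_at blocks inf g <-> g = 1%g.
Proof.
split; first by case=> s [last_s ->]; rewrite moveseqE last_s move_refl.
by move=> ->; exists [::].
Qed.

Lemma abelem_moves_at : (2.-abelem moves_at)%g.
Proof.
rewrite abelemE //; apply/andP; split.
- by apply/centsP => _ /imsetP [a _ ->] _ /imsetP [b _ ->]; exact: moves_commute.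
- by apply/exponentP => _ /imsetP [a _ ->]; rewrite expgS expg1 move_mul_self.
Qed.

Lemma card_moves_at : #|moves_at| = #|T|.
Proof. by rewrite card_imset // => x y E; rewrite -(move_first inf x) E move_first. Qed.

Lemma card_moves_at_pow : 0 < lam -> exists2 k, 2 <= k & #|moves_at| = 2 ^ k.
Proof.
move=> lam_gt0.
have /p_natP [k card_G] := abelem_pgroup abelem_moves_at.
exists k => //; move: card_G; rewrite card_moves_at card_T.
by case: k => [|[|k]] //= ?; lia.
Qed.

End ComposingMoves.

Lemma lineE_moves a b c d : moves_compose ->
  #|[set a; b; c; d]| = 4 -> is_line a b c d = (mv a b == mv c d).
Proof.
move=> compose abcd4; have [ab ac ad [bc bd cd]] := card4_neq abcd4.
apply/idP/eqP => [abcd|mv_abcd].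
  by rewrite (move_image compose a b c) (move_lineE abcd).
have := move_line ab (_ : c != a) (_ : c != b); rewrite !(eq_sym c) => /(_ ac bc).
by rewrite mv_abcd; case: (move_swap cd) => ->.
Qed.

Lemma moves_compose_BQS : 0 < lam -> moves_compose ->
  exists2 m, 2 <= m & is_BQS blocks m.
Proof.
move=> lam_gt0 compose.
have /card_gt0P [inf _] : 0 < #|T| by rewrite card_T addn2.
set G := moves_at_group compose inf.
have abG : (2.-abelem G)%g := abelem_moves_at compose inf.
have ntG : (G :!=: 1)%g.
  by rewrite trivg_card1 /= card_moves_at card_T; lia.
have [k k_gt1 card_G] := card_moves_at_pow compose inf lam_gt0.
exists ('dim G); first by rewrite (dim_abelemE abG ntG) card_G pfactorK.
have G_mv x : mv inf x \in G by apply/imsetP; exists x.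
pose f x := abelem_rV abG ntG (mv inf x).
exists f; split.
  apply: inj_card_bij; last by rewrite (card_abelem_rV abG ntG) card_moves_at.
  move=> x y /(abelem_rV_inj (G_mv x) (G_mv y)) E.
  by rewrite -(move_first inf x) E move_first.
move=> B; case: (boolP (#|B| == 4)) => [/eqP B4|]; last first.
  by apply: contraNF => /card_block ->.
have [a [b [c [d EB]]]] := cards4_set B4; rewrite EB in B4 *.
have [ab ac ad [bc bd cd]] := card4_neq B4.
rewrite andTb -/(is_line a b c d) lineE_moves //.
have -> : [set a; b; c; d] = a |: (b |: (c |: [set d])) by finset_eq.
rewrite !big_setU1 ?big_set1 /= ?inE; rewrite_neqs => //.
have rV_M x y : x \in G -> y \in G ->
    (abelem_rV abG ntG x + abelem_rV abG ntG y)%R = abelem_rV abG ntG (x * y).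
  by move=> Gx Gy; rewrite abelem_rV_M.
rewrite /f !rV_M ?groupM ?G_mv // -(abelem_rV_1 abG ntG).
rewrite (inj_in_eq (@abelem_rV_inj _ _ _ abG ntG)) ?groupM ?group1 ?G_mv //.
by rewrite !mulgA -compose -mulgA -compose -eq_invg_mul invg_move.
Qed.

Definition pi_trivial_L_abelem (inf : T) : Prop :=
  (forall g, pi_at blocks inf g <-> g = 1%g) /\
  exists2 m, 2 <= m & exists G : {group {perm T}},
    [/\ forall g, g \in G <-> L_at blocks inf g, (2.-abelem G)%g & #|G| = 2 ^ m].

Lemma moves_compose_L_abelem inf :
  0 < lam -> moves_compose -> pi_trivial_L_abelem inf.
Proof.
move=> lam_gt0 compose; split; first exact: pi_at_trivial.
have [m m_gt1 card_G] := card_moves_at_pow compose inf lam_gt0.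
exists m => //; exists (moves_at_group compose inf).
by split; [exact: moves_atP | exact: abelem_moves_at | exact: card_G].
Qed.

Lemma L_abelem_moves_compose inf : pi_trivial_L_abelem inf -> moves_compose.
Proof.
move=> [pi1 [_ _ [G [GL abG _]]]].
have G_mv x : mv inf x \in G by apply/GL; exists [:: x]; rewrite /= mulg1.
have mvE a b : mv a b = (mv inf a * mv inf b)%g.
  have /pi1 /= : pi_at blocks inf (moveseq blocks inf [:: a; b; inf]).
    by exists [:: a; b; inf].
  rewrite mulg1 => loop1.
  have ab_binf : (mv a b * mv b inf = mv inf a)%g.
    by rewrite -(mulKg (mv inf a) (mv a b * mv b inf)%g) loop1 mulg1 invg_move.
  by rewrite -[mv a b]mulg1 -(move_mul_self b inf) mulgA ab_binf [mv b inf]moveC.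
move=> a b c; rewrite (mvE a b) (mvE c a) (mvE c b).
have comm_ca : commute (mv inf c) (mv inf a).
  by apply: (centsP (abelem_abelian abG)); apply: G_mv.
by rewrite mulgA -(mulgA (mv inf c)) -comm_ca mulgA move_mul_self mul1g.
Qed.

Lemma moves_compose_triangle : moves_compose -> prop_triangle blocks.
Proof.
move=> compose B1 B2 B1b B2b meet2.
have /cards2P [a [b [ab E12]]] : #|B1 :&: B2| == 2 by rewrite meet2.
have /andP[aB1 aB2] : (a \in B1) && (a \in B2) by rewrite -in_setI E12 !inE eqxx.
have /andP[bB1 bB2] : (b \in B1) && (b \in B2).
  by rewrite -in_setI E12 !inE eqxx orbT.
have [c [d [EB1 abcd4 _]]] := block_other_tperm B1b aB1 bB1 ab.
have [e [f [EB2 abef4 _]]] := block_other_tperm B2b aB2 bB2 ab.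
have [_ ac ad [bc bd cd]] := card4_neq abcd4.
have [_ ae af [be bf ef]] := card4_neq abef4.
have meet x : x \in B1 -> x \in B2 -> (x == a) || (x == b).
  by move=> x1 x2; rewrite -in_set2 -E12 inE x1 x2.
have [ce cf de df] : [/\ c != e, c != f, d != e & d != f].
  split; apply/eqP => E;
    [move: (meet c) | move: (meet c) | move: (meet d) | move: (meet d)];
  by rewrite EB1 EB2 E !inE eqxx ?orbT; rewrite_neqs => /(_ isT isT).
have mv_cd : mv a b = mv c d by apply/eqP; rewrite -lineE_moves // /is_line -EB1.
have mv_ef : mv a b = mv e f by apply/eqP; rewrite -lineE_moves // /is_line -EB2.
have cdef : is_line c d e f by rewrite lineE_moves ?cards4 // -mv_cd mv_ef.
rewrite (_ : B1 :\: B2 :|: B2 :\: B1 = [set c; d; e; f]); first exact: cdef.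
by rewrite EB1 EB2; finset_eq.
Qed.

End Moves.

Theorem proposition5p3 (T : finType) (lam : nat) (blocks : seq {set T}) (inf : T) :
  0 < lam ->
  is_2_design 4 lam blocks -> supersimple blocks ->
  #|T| = 2 * lam + 2 ->
  [/\ (prop_triangle blocks <-> exists2 m, 2 <= m & is_BQS blocks m),
      ((exists2 m, 2 <= m & is_BQS blocks m) <->
         ((forall g, pi_at blocks inf g <-> g = 1%g) /\
          exists2 m, 2 <= m &
            exists G : {group {perm T}},
              [/\ forall g, g \in G <-> L_at blocks inf g,
                  (2.-abelem G)%g & #|G| = 2 ^ m]))
    & (prop_triangle blocks <->
         ((forall g, pi_at blocks inf g <-> g = 1%g) /\
          exists2 m, 2 <= m &
            exists G : {group {perm T}},
              [/\ forall g, g \in G <-> L_at blocks inf g,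
                  (2.-abelem G)%g & #|G| = 2 ^ m]))].
Proof.
move=> lam_gt0 design simple card_T.
have triangle_compose : prop_triangle blocks <-> moves_compose blocks.
  split; [exact: triangle_moves_compose design simple card_T
        | exact: moves_compose_triangle design simple card_T].
have compose_BQS : moves_compose blocks <-> exists2 m, 2 <= m & is_BQS blocks m.
  split; first exact: moves_compose_BQS design simple card_T lam_gt0.
  by case=> m _ /BQS_triangle /triangle_compose.
have compose_L : moves_compose blocks <-> pi_trivial_L_abelem blocks inf.
  split; [exact: moves_compose_L_abelem design simple card_T inf lam_gt0
        | exact: L_abelem_moves_compose design simple card_T inf].
split; first exact: iff_trans triangle_compose compose_BQS.
- exact: iff_trans (iff_sym compose_BQS) compose_L.
- exact: iff_trans triangle_compose compose_L.
Qed.
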